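(* Assume the law of excluded middle. Then for all $\alpha,\beta\in\mathrm{ord}$ we have $\alpha\le\beta$ or $\beta<\alpha$. Moreover, if $\beta<\alpha$, then there exists $i\in I_\alpha$ such that $\beta\le\alpha_i$.
   Context: Let $\mathfrak F$ be a set of index sets such that: $\mathbb N$ and each $\mathbb N_k=\{n\in\mathbb N:n<k\}$ ($k\ge 0$) belong to $\mathfrak F$; every finitely enumerated subset of an element of $\mathfrak F$ is isomorphic to an element of $\mathfrak F$; for $J\in\mathfrak F$ the set of finitely enumerated subsets of $J$ is isomorphic to an element of $\mathfrak F$; $\mathfrak F$ is stable under disjoint unions indexed by elements of $\mathfrak F$. A finitely enumerated subset of $A$ is one given by a map $\mathbb N_k\to A$; write $F\subseteq_f I$. The set $\mathrm{ord}$ is inductively generated by $\underline 0$ and, for every family $(\alpha_i)_{i\in I}$ with $I\in\mathfrak F$, $\alpha_i\in\mathrm{ord}$, an element $\mathrm S(\alpha_i)_{i\in I}$; for such $\alpha$, $I_\alpha=I$ and $\alpha_i$ are its definitional subordinals; $I_{\underline 0}=\emptyset$. For a finite list $F$ in $I_\alpha$, $\alpha_F$ is the list of the $\alpha_i$, $i\in F$. Relations between an element and a nonempty finite list, by simultaneous induction: $\alpha\le\beta^1,\dots,\beta^m$ means $\alpha_i<\beta^1,\dots,\beta^m$ for all $i\in I_\alpha$; $\alpha<\beta^1,\dots,\beta^m$ means there exist $F_1\subseteq_f I_{\beta^1},\dots,F_m\subseteq_f I_{\beta^m}$, not all empty, with $\alpha\le\beta^1_{F_1},\dots,\beta^m_{F_m}$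 (concatenated list). $\alpha\le\beta$ and $\alpha<\beta$ are the case $m=1$. *)

From Stdlib Require Import List.
Import ListNotations.

(* The collection of index sets 𝔉 is modelled as a universe:
   codes U with decoding El : U -> Type. *)

Definition iso (A B : Type) : Prop :=
  exists (f : A -> B) (g : B -> A),
    (forall a, g (f a) = a) /\ (forall b, f (g b) = b).

Definition Nk (k : nat) : Type := {n : nat | n < k}.

(* A finitely enumerated subset of A is given by a map N_k -> A, i.e. a list
   of elements of A.  Its underlying subset: *)
Definition fe_subset {A : Type} (F : list A) : Type := {a : A | In a F}.

Record frakF (U : Type) (El : U -> Type) : Prop := {
  frakF_nat : exists u, iso (El u) nat;
  frakF_Nk : forall k, exists u, iso (El u) (Nk k);
  frakF_fesub : forall u (F : list (El u)), exists v, iso (El v) (fe_subset F);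
  frakF_fesets : forall u, exists v, iso (El v) (list (El u));
  frakF_sigma : forall u (v : El u -> U), exists w, iso (El w) {x : El u & El (v x)}
}.

Section Ord.
Variables (U : Type) (El : U -> Type).

Inductive ord : Type :=
| Zero : ord
| Sup : forall u : U, (El u -> ord) -> ord.

Definition idx (a : ord) : Type :=
  match a with Zero => Empty_set | Sup u _ => El u end.

Definition sub (a : ord) : idx a -> ord :=
  match a as a0 return idx a0 -> ord with
  | Zero => fun e => match e with end
  | Sup u f => f
  end.

Definition subs (a : ord) (F : list (idx a)) : list ord := map (sub a) F.

(* A choice of F_1 ⊆_f I_{beta^1}, ..., F_m ⊆_f I_{beta^m} *)
Fixpoint sel (bs : list ord) : Type :=
  match bs with
  | [] => unit
  | b :: bs' => (list (idx b) * sel bs')%type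
  end.

Fixpoint sel_list (bs : list ord) : sel bs -> list ord :=
  match bs as bs0 return sel bs0 -> list ord with
  | [] => fun _ => []
  | b :: bs' => fun F => subs b (fst F) ++ sel_list bs' (snd F)
  end.

Fixpoint sel_all_empty (bs : list ord) : sel bs -> Prop :=
  match bs as bs0 return sel bs0 -> Prop with
  | [] => fun _ => True
  | b :: bs' => fun F => fst F = [] /\ sel_all_empty bs' (snd F)
  end.

(* alpha <= beta^1,...,beta^m  :<->  alpha_i < beta^1,...,beta^m for all i in I_alpha,
   where  x < beta^1,...,beta^m  :<->  exists F_1..F_m not all empty with
   x <= beta^1_{F_1},...,beta^m_{F_m}.  (Simultaneous definition, structural in alpha.) *)
Fixpoint ord_le (a : ord) (bs : list ord) {struct a} : Prop :=
  match a with
  | Zero => True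
  | Sup u f => forall i : El u,
      exists F : sel bs, ~ sel_all_empty bs F /\ ord_le (f i) (sel_list bs F)
  end.

Definition ord_lt (a : ord) (bs : list ord) : Prop :=
  exists F : sel bs, ~ sel_all_empty bs F /\ ord_le a (sel_list bs F).

End Ord.

Arguments Zero {U El}.
Arguments Sup {U El} u _.
Arguments idx {U El} a.
Arguments sub {U El} a _.
Arguments ord_le {U El} a bs.
Arguments ord_lt {U El} a bs.

(* With excluded middle, the list relations reduce to the single-element order
   [ord_le1 a b] (every [a_i] lies below some [b_k]): a nonempty finite list of
   ordinals has an [ord_le1]-maximum, so [x < L] holds exactly when [x] lies
   below a definitional subordinal of a single member of [L].  Totality of
   [ord_le1] is then a direct induction: either every [a_i] is below some
   [b_k], or some [a_i] is below no [b_k], and then [b <= a_i] by induction.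
   The closure properties of the index sets play no role. *)

From Stdlib Require Import List.
Import ListNotations.

Section Ordinals.
Variables (U : Type) (El : U -> Type).

Notation ord := (ord U El).

Fixpoint ord_le1 (a b : ord) {struct a} : Prop :=
  match a with
  | Zero => True
  | Sup u f => forall i : El u, exists k : idx b, ord_le1 (f i) (sub b k)
  end.

Lemma ord_le1_refl (a : ord) : ord_le1 a a.
Proof.
  induction a as [|u f IH]; simpl; auto.
  intro i; exists i; apply IH.
Qed.

Lemma ord_le1_sub (a b : ord) :
  ord_le1 a b -> forall i : idx a, exists k : idx b, ord_le1 (sub a i) (sub b k).
Proof. destruct a as [|u f]; simpl; [intros _ []|auto]. Qed.

Lemma ord_le1_trans (a b c : ord) : ord_le1 a b -> ord_le1 b c -> ord_le1 a c.
Proof.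
  revert b c; induction a as [|u f IH]; simpl; auto.
  intros b c Hab Hbc i.
  destruct (Hab i) as [k Hk].
  destruct (ord_le1_sub b c Hbc k) as [n Hn].
  exists n; eapply IH; eauto.
Qed.

Lemma ord_le1_of_le1_sub (a b : ord) (k : idx b) : ord_le1 a (sub b k) -> ord_le1 a b.
Proof.
  revert b k; induction a as [|u f IH]; simpl; auto.
  intros b k H i.
  destruct (H i) as [n Hn].
  exists k; eapply IH; eauto.
Qed.

Definition le_some_sub (c : ord) (L : list ord) : Prop :=
  exists x, In x L /\ exists k : idx x, ord_le1 c (sub x k).

Lemma le_some_sub_single (c x : ord) :
  le_some_sub c [x] <-> exists k : idx x, ord_le1 c (sub x k).
Proof.
  split.
  - intros [y [[<-|[]] Hk]]; exact Hk.
  - intro Hk; exists x; split; [left|]; auto.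
Qed.

Lemma le_some_sub_of_le1 (c y : ord) (S : list ord) :
  In y S -> ord_le1 c y -> forall j : idx c, le_some_sub (sub c j) S.
Proof.
  intros Hy Hc j.
  destruct (ord_le1_sub c y Hc j) as [n Hn].
  exists y; eauto.
Qed.

Fixpoint sel_nil (L : list ord) : sel U El L :=
  match L as L0 return sel U El L0 with
  | [] => tt
  | _ :: L' => ([], sel_nil L')
  end.

Lemma sel_pick (L : list ord) (x : ord) (k : idx x) :
  In x L -> exists F : sel U El L,
    ~ sel_all_empty U El L F /\ In (sub x k) (sel_list U El L F).
Proof.
  induction L as [|b L IH]; simpl; [intros []|].
  intros [<-|Hx].
  - exists ([k], sel_nil L); simpl; split.
    + intros [H _]; discriminate.
    + left; reflexivity.
  - destruct (IH Hx) as [F [Hne HF]].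
    exists ([], F); simpl; split; [tauto|exact HF].
Qed.

Lemma in_sel_list (L : list ord) (F : sel U El L) (y : ord) :
  In y (sel_list U El L F) -> exists x, In x L /\ exists k : idx x, y = sub x k.
Proof.
  induction L as [|b L IH]; simpl; [intros []|].
  destruct F as [Fb F]; simpl; intro Hy.
  apply in_app_or in Hy; destruct Hy as [Hy|Hy].
  - apply in_map_iff in Hy; destruct Hy as [k [<- _]].
    exists b; eauto.
  - destruct (IH F Hy) as [x [Hx Hk]]; eauto.
Qed.

Lemma sel_list_nonempty (L : list ord) (F : sel U El L) :
  ~ sel_all_empty U El L F -> exists y, In y (sel_list U El L F).
Proof.
  induction L as [|b L IH]; simpl; [tauto|].
  destruct F as [[|k Fb] F]; simpl; intro Hne.
  - destruct (IH F) as [y Hy]; [tauto|].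
    exists y; exact Hy.
  - exists (sub b k); left; reflexivity.
Qed.

Section ExcludedMiddle.
Hypothesis lem : forall P : Prop, P \/ ~ P.

Lemma ord_le1_or_ge_sub (a b : ord) : ord_le1 a b \/ exists i : idx a, ord_le1 b (sub a i).
Proof.
  revert b; induction a as [|u f IH]; simpl; auto.
  intro b.
  destruct (lem (exists i, ~ exists k, ord_le1 (f i) (sub b k))) as [[i Hi]|Hall].
  - right; exists i.
    destruct b as [|v g]; simpl; auto.
    intro k.
    destruct (IH i (g k)) as [H|H]; auto.
    exfalso; apply Hi; exists k; exact H.
  - left; intro i.
    destruct (lem (exists k, ord_le1 (f i) (sub b k))) as [H|H]; auto.
    exfalso; apply Hall; exists i; exact H.
Qed.

Lemma ord_le1_total (a b : ord) : ord_le1 a b \/ ord_le1 b a.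
Proof.
  destruct (ord_le1_or_ge_sub a b) as [H|[i H]]; auto.
  right; eapply ord_le1_of_le1_sub; eauto.
Qed.

Lemma ord_le1_list_max (d : ord) (S : list ord) :
  exists y, In y (d :: S) /\ forall z, In z (d :: S) -> ord_le1 z y.
Proof.
  revert d; induction S as [|s S IH]; intro d.
  - exists d; split; [left; auto|].
    intros z [<-|[]]; apply ord_le1_refl.
  - destruct (ord_le1_total d s) as [Hds|Hsd].
    + destruct (IH s) as [y [Hy Hmax]].
      exists y; split; [right; exact Hy|].
      intros z [<-|Hz]; [|apply Hmax; exact Hz].
      apply (ord_le1_trans _ s); [exact Hds|apply Hmax; left; reflexivity].
    + destruct (IH d) as [y [Hy Hmax]].
      exists y; split; [destruct Hy as [<-|Hy]; [left; reflexivity|right; right; exact Hy]|].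
      intros z [<-|[<-|Hz]]; [apply Hmax; left; reflexivity| |apply Hmax; right; exact Hz].
      apply (ord_le1_trans _ d); [exact Hsd|apply Hmax; left; reflexivity].
Qed.

Lemma ord_le1_of_dominated (c y0 : ord) (S : list ord) :
  In y0 S -> (forall j : idx c, le_some_sub (sub c j) S) ->
  exists y, In y S /\ ord_le1 c y.
Proof.
  destruct S as [|s S]; [intros []|intros _ Hdom].
  destruct (ord_le1_list_max s S) as [y [Hy Hmax]].
  exists y; split; [exact Hy|].
  destruct c as [|u f]; simpl; auto.
  intro j.
  destruct (Hdom j) as [y' [Hy' [m Hm]]].
  destruct (ord_le1_sub y' y (Hmax y' Hy') m) as [n Hn].
  exists n; eapply ord_le1_trans; eauto.
Qed.

Lemma ord_lt_iff_of_le_iff (c : ord) :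
  (forall L, ord_le c L <-> forall j : idx c, le_some_sub (sub c j) L) ->
  forall L, ord_lt c L <-> le_some_sub c L.
Proof.
  intros Hc L; unfold ord_lt; split.
  - intros [F [Hne HF]].
    rewrite Hc in HF.
    destruct (sel_list_nonempty L F Hne) as [y0 Hy0].
    destruct (ord_le1_of_dominated c y0 _ Hy0 HF) as [y [Hy Hle]].
    destruct (in_sel_list L F y Hy) as [x [Hx [k ->]]].
    exists x; eauto.
  - intros [x [Hx [k Hk]]].
    destruct (sel_pick L x k Hx) as [F [Hne HF]].
    exists F; split; [exact Hne|].
    rewrite Hc; apply (le_some_sub_of_le1 _ _ _ HF Hk).
Qed.

Lemma ord_le_iff (a : ord) (L : list ord) :
  ord_le a L <-> forall i : idx a, le_some_sub (sub a i) L.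
Proof.
  revert L; induction a as [|u f IH]; simpl; [tauto|].
  intro L; change ((forall i, ord_lt (f i) L) <-> (forall i, le_some_sub (f i) L)).
  split; intros H i; apply (ord_lt_iff_of_le_iff (f i) (IH i)); auto.
Qed.

Lemma ord_lt_iff (b : ord) (L : list ord) : ord_lt b L <-> le_some_sub b L.
Proof. apply ord_lt_iff_of_le_iff, ord_le_iff. Qed.

Lemma ord_le_single (a b : ord) : ord_le a [b] <-> ord_le1 a b.
Proof.
  rewrite ord_le_iff.
  destruct a as [|u f]; simpl; [split; auto; intros _ []|].
  split; intros H i; apply le_some_sub_single, H.
Qed.

Lemma ord_lt_single (a b : ord) : ord_lt b [a] <-> exists i : idx a, ord_le1 b (sub a i).
Proof. rewrite ord_lt_iff; apply le_some_sub_single. Qed.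

End ExcludedMiddle.
End Ordinals.

Theorem proposition3p19 (U : Type) (El : U -> Type) (HF : frakF U El) :
  (forall P : Prop, P \/ ~ P) ->
  forall alpha beta : ord U El,
    (ord_le alpha [beta] \/ ord_lt beta [alpha]) /\
    (ord_lt beta [alpha] -> exists i : idx alpha, ord_le beta [sub alpha i]).
Proof.
  intros lem alpha beta.
  rewrite (ord_le_single _ _ lem), (ord_lt_single _ _ lem).
  split.
  - apply ord_le1_or_ge_sub, lem.
  - intros [i Hi]; exists i; apply ord_le_single; assumption.
Qed.
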